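(* Let $p$ be a prime, $r\ge1$, $q=p^r$, and $G=(\mathbb{Z}/q\mathbb{Z})^*$. Let $h:G\to\mathbb{R}$ be an even function (i.e. $h(-b)=h(b)$ for all $b\in G$) that is monotonic on $[1,q/2]_\mathbb{Z}=\{i\in\mathbb{Z}:1\le i\le q/2,\ \gcd(i,p)=1\}$ (viewed as a subset of $G$ via reduction mod $q$). If there is $a\in G$ with $a\neq\pm1$ such that $h(ab)=h(b)$ for all $b\in G$, then $h$ is constant. *)

From HB Require Import structures.
From mathcomp Require Import all_boot all_order all_algebra.
From mathcomp Require Import reals.

Import Order.TTheory GRing.Theory Num.Theory.
Local Open Scope ring_scope.

Definition half_range (p q : nat) (i : nat) : bool :=
  [&& (1 <= i)%N, (i.*2 <= q)%N & coprime i p].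

Definition monotone_on_half {R : realType} (p q : nat) (h : 'Z_q -> R) : Prop :=
  (forall i j : nat, half_range p q i -> half_range p q j -> (i <= j)%N ->
      h (i%:R) <= h (j%:R))
  \/
  (forall i j : nat, half_range p q i -> half_range p q j -> (i <= j)%N ->
      h (j%:R) <= h (i%:R)).

From HB Require Import structures.
From mathcomp Require Import all_boot all_order all_algebra.
From mathcomp Require Import reals zify.
Import Order.TTheory GRing.Theory Num.Theory.

Set Implicit Arguments.
Unset Strict Implicit.

(* Put q = p ^ r, S = {i : 1 <= i <= q/2, p does not divide i} and g i = h (i mod q).
   Since h is even, h b = g |b| for a unit b, where |b| in S is the absolute
   residue of b; invariance under a becomes g |d x| = g x for d = |a| in S, d >= 2.
   If g were not constant, monotonicity would make its level set at g 1 a proper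
   initial segment S /\ [1, k], and both this segment and its complement would be
   stable under x |-> |d x|.  That is impossible.  Stability of the segment forces
   q <= 2k + 2d, since the first x with d x > k must wrap around q.  For odd q with
   3k < q, the segment S /\ [1, k/2] is stable as well, and its own bound is absurd.
   For odd q with 3k >= q, stability of the complement at (q - m)/2 shows that d m
   lies outside [q - 2k, q + 2k] for m = 1 and m = 3 (m = 5 if p = 3), which
   contradicts q <= 2k + 2d.  For q = 2 ^ r, stability of the complement at q/2 - 1
   alone gives 2k + 2d < q. *)

Definition absmod (q n : nat) : nat := minn (n %% q) (q - n %% q).

Section AbsMod.

Variable q : nat.
Hypothesis q_gt0 : (0 < q)%N.

Lemma absmod_leq n : (n <= q)%N -> absmod q n = minn n (q - n).
Proof.
rewrite leq_eqVlt => /orP [/eqP ->|lt_nq]; last by rewrite /absmod modn_small.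
by rewrite /absmod modnn subn0 minnC subnn.
Qed.

Lemma absmod_small n : (n * 2 <= q)%N -> absmod q n = n.
Proof. by move=> le_nq; rewrite absmod_leq; [apply/minn_idPl|]; lia. Qed.

Lemma absmod_le_half n : (absmod q n * 2 <= q)%N.
Proof. by rewrite /absmod; have := ltn_pmod n q_gt0; lia. Qed.

Lemma absmod_mod n : absmod q (n %% q) = absmod q n.
Proof. by rewrite /absmod modn_mod. Qed.

Lemma absmod_opp m n : (q %| m + n)%N -> absmod q m = absmod q n.
Proof.
move=> dvd_q; have /dvdnP [M eM] : (q %| m %% q + n %% q)%N by rewrite /dvdn modnDm.
have := ltn_pmod m q_gt0; have := ltn_pmod n q_gt0; rewrite /absmod => lt_n lt_m.
have M_le1 : (M <= 1)%N.
  rewrite leqNgt; apply/negP => M_gt1.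
  have : (2 * q <= M * q)%N by rewrite leq_mul2r M_gt1 orbT.
  lia.
have [M0|M1] : M = 0%N \/ M = 1%N by lia.
- rewrite M0 mul0n in eM.
  have m0 : (m %% q = 0)%N by lia.
  have n0 : (n %% q = 0)%N by lia.
  by rewrite m0 n0.
- by rewrite M1 mul1n in eM; rewrite minnC; congr minn; lia.
Qed.

Lemma absmod_mulr c n : absmod q (c * absmod q n) = absmod q (c * n).
Proof.
rewrite {2}/absmod; have := ltn_pmod n q_gt0; case: (leqP (n %% q) (q - n %% q)) => _ lt_nq.
- by rewrite -[LHS]absmod_mod modnMmr absmod_mod.
- apply: absmod_opp; rewrite /dvdn -modnDmr -modnMmr modnDmr.
  by rewrite -mulnDr subnK ?(ltnW lt_nq) // modnMl.
Qed.

End AbsMod.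

Lemma ndvdn_subn1 p n : (1 < p)%N -> (0 < n)%N -> (p %| n)%N -> ~~ (p %| n - 1)%N.
Proof.
move=> p_gt1 n_gt0 dvd_pn; apply/negP => dvd_pn1.
have := dvdn_sub dvd_pn dvd_pn1; rewrite (_ : n - (n - 1) = 1)%N; last by lia.
by rewrite dvdn1; lia.
Qed.

Lemma exists_ndvdn_near p x : (1 < p)%N -> (1 < x)%N ->
  exists y, [/\ (0 < y)%N, ~~ (p %| y)%N, (y < x)%N & (x <= y + 2)%N].
Proof.
move=> p_gt1 x_gt1; case: (boolP (p %| x - 1)%N) => dvd_px1; last first.
  by exists (x - 1)%N; split=> //; lia.
have le_px1 : (p <= x - 1)%N by apply: dvdn_leq; rewrite // subn_gt0.
exists (x - 2)%N; split; [lia | | lia | lia].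
by rewrite (_ : x - 2 = x - 1 - 1)%N ?ndvdn_subn1 //; lia.
Qed.

Lemma dvdn_add_double_eq q X y k : (0 < X)%N -> (X <= k)%N -> (k < y)%N ->
  (y + k < q)%N -> (q %| X + 2 * y)%N -> X + 2 * y = q.
Proof.
move=> X_gt0 le_Xk lt_ky lt_ykq /dvdnP [[|[|M]] eM]; [lia | lia |].
have : (2 * q <= M.+2 * q)%N by apply: leq_mul.
lia.
Qed.

Lemma dvdn_add_double_far q X y k : odd q -> odd X -> (k < y)%N ->
  (y + k < q)%N -> (q %| X + 2 * y)%N -> (X + 2 * k < q)%N \/ (q + 2 * k < X)%N.
Proof.
move=> odd_q odd_X lt_ky lt_ykq /dvdnP [M eM].
have odd_M : odd M by move: (congr1 odd eM); rewrite oddD !oddM odd_X odd_q /= andbT.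
case: M odd_M eM => [|[|[|M]]] //= _ eM; first by left; lia.
have : (3 * q <= M.+3 * q)%N by apply: leq_mul.
right; lia.
Qed.

Section HalfRange.

Variables p q : nat.
Hypothesis p_prime : prime p.

Lemma half_rangeE i :
  half_range p q i = [&& (0 < i)%N, (i * 2 <= q)%N & ~~ (p %| i)%N].
Proof. by rewrite /half_range coprime_sym prime_coprime // -muln2. Qed.

Lemma half_range1 : (1 < q)%N -> half_range p q 1.
Proof. by move=> q_gt1; rewrite half_rangeE dvdn1 mul1n q_gt1 neq_ltn prime_gt1 ?orbT. Qed.

Hypothesis p_dvd_q : (p %| q)%N.

Lemma half_range_absmod n : (0 < q)%N -> ~~ (p %| n)%N -> half_range p q (absmod q n).
Proof.
move=> q_gt0 ndvd_pn; have ndvd_pnq : ~~ (p %| n %% q)%N by rewrite /dvdn modn_dvdm.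
rewrite half_rangeE absmod_le_half //= -absmod_mod absmod_leq ?(ltnW (ltn_pmod _ _)) //.
have nq_gt0 : (0 < n %% q)%N by rewrite lt0n; apply: contraNneq ndvd_pnq => ->.
have := ltn_pmod n q_gt0.
case: (leqP (n %% q) (q - n %% q)) => _ lt_nq; first by rewrite nq_gt0.
by rewrite subn_gt0 lt_nq dvdn_subr ?(ltnW lt_nq).
Qed.

Lemma half_range_absmodM x y : (0 < q)%N ->
  half_range p q x -> half_range p q y -> half_range p q (absmod q (x * y)).
Proof.
move=> q_gt0 hx hy; apply: half_range_absmod; rewrite // Euclid_dvdM // negb_or.
by move: hx hy; rewrite !half_rangeE => /and3P [_ _ ->] /and3P [_ _ ->].
Qed.

End HalfRange.

Section StableSegments.

Variables p q d : nat.
Hypotheses (p_prime : prime p) (p_dvd_q : (p %| q)%N).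
Hypotheses (hd : half_range p q d) (d_gt1 : (1 < d)%N).

Definition stable_below j := forall x, half_range p q x -> (x <= j)%N ->
  (absmod q (d * x) <= j)%N.

Definition stable_above j := forall x, half_range p q x -> (j < x)%N ->
  (j < absmod q (d * x))%N.

Let p_gt1 : (1 < p)%N := prime_gt1 p_prime.

Let d_le_half : (d * 2 <= q)%N.
Proof. by move: hd; rewrite half_rangeE // => /and3P []. Qed.

Let ndvd_pd : ~~ (p %| d)%N.
Proof. by move: hd; rewrite half_rangeE // => /and3P []. Qed.

Let q_gt0 : (0 < q)%N.
Proof. by lia. Qed.

Lemma stable_below_ge j : (0 < j)%N -> stable_below j -> (d <= j)%N.
Proof.
move=> j_gt0 below; have := below 1%N (@half_range1 p q p_prime _) j_gt0.
by rewrite muln1 absmod_small //; apply; lia.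
Qed.

Lemma exists_escape j : (d <= j)%N ->
  exists x, [/\ ~~ (p %| x)%N, (x <= j)%N & (j < d * x)%N].
Proof.
move=> le_dj; case: (boolP (p %| j)%N) => dvd_pj; last by exists j; split=> //; nia.
have j_gt2 : (2 < j)%N.
  rewrite ltn_neqAle (leq_trans d_gt1 le_dj) andbT; apply: contraTneq dvd_pj => j2.
  have d2 : d = 2%N by lia.
  by move: ndvd_pd; rewrite d2 -j2.
exists (j - 1)%N; split; [apply: ndvdn_subn1 => //; lia | lia | nia].
Qed.

Lemma stable_below_bound j : (0 < j)%N -> (j * 2 <= q)%N -> stable_below j ->
  (q <= 2 * j + 2 * d)%N.
Proof.
move=> j_gt0 le_jq below; have le_dj := stable_below_ge j_gt0 below.
have [x [ndvd_px le_xj lt_jdx]] := exists_escape le_dj.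
pose escapes x := ~~ (p %| x)%N && (j < d * x)%N.
have ex_escape : exists x, escapes x by exists x; apply/andP.
case: (ex_minnP ex_escape) => x0 /andP [ndvd_px0 lt_jdx0] min_x0.
have le_x0j : (x0 <= j)%N by apply: leq_trans (min_x0 x _) le_xj; apply/andP.
have x0_gt1 : (1 < x0)%N by nia.
have [y [y_gt0 ndvd_py lt_yx0 le_x0y]] := exists_ndvdn_near p_gt1 x0_gt1.
have le_dyj : (d * y <= j)%N.
  rewrite leqNgt; apply/negP => lt_jdy.
  by have := min_x0 y; rewrite /escapes ndvd_py lt_jdy; lia.
have le_dx0 : (d * x0 <= j + 2 * d)%N.
  by have := leq_mul (leqnn d) le_x0y; rewrite mulnDr; lia.
have hx0 : half_range p q x0 by rewrite half_rangeE // ndvd_px0 andbT; apply/andP; lia.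
have := below x0 hx0 le_x0j; case: (ltnP (d * x0) q) => [lt_dx0q|]; last by lia.
by rewrite absmod_leq; lia.
Qed.

Lemma stable_below_half k : ~~ (p %| 2)%N -> (3 * k < q)%N ->
  stable_below k -> stable_below k./2.
Proof.
move=> ndvd_p2 lt_3kq below x hx le_xk.
have h2x : half_range p q (2 * x).
  move: hx; rewrite !half_rangeE // Euclid_dvdM // negb_or ndvd_p2 => /and3P [x_gt0 _ ->].
  by rewrite andbT; apply/andP; lia.
have := below (2 * x) h2x ltac:(lia); rewrite mulnCA -absmod_mulr //.
have := below x hx ltac:(lia); have := absmod_le_half q_gt0 (d * x).
set t := absmod q (d * x) => le_tq le_tk.
by rewrite absmod_leq; lia.
Qed.

(* z = (q - m)/2 lies above k, and m + 2z = q makes the residue y of d z satisfy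
   d m + 2y = 0 mod q. *)
Lemma stable_above_residue k m : odd q -> odd m -> ~~ (p %| m)%N ->
  (m + 2 * k < q)%N -> stable_above k ->
  exists2 y, (k < y)%N && (y + k < q)%N & (q %| d * m + 2 * y)%N.
Proof.
move=> odd_q odd_m ndvd_pm lt_mkq above.
set z := (q - m)./2.
have ez : (z * 2 + m = q)%N.
  have := @even_halfK (q - m); rewrite oddB ?odd_q ?odd_m; last lia.
  by rewrite -/z -muln2 => /(_ isT); lia.
have hz : half_range p q z.
  rewrite half_rangeE //; apply/and3P; split; [lia | lia |].
  apply: contra ndvd_pm => dvd_pz.
  by rewrite (_ : m = q - z * 2)%N ?dvdn_sub ?dvdn_mulr //; lia.
have := above z hz ltac:(lia).
rewrite -absmod_mod absmod_leq ?(ltnW (ltn_pmod _ q_gt0)) // => lt_k.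
exists (d * z %% q)%N; first by apply/andP; lia.
rewrite /dvdn -modnDmr modnMmr modnDmr.
by rewrite (_ : d * m + 2 * (d * z) = d * q)%N ?modnMl // -ez; nia.
Qed.

Lemma stable_below_ge_third k : ~~ (p %| 2)%N -> (0 < k)%N -> stable_below k ->
  (q <= 3 * k)%N.
Proof.
move=> ndvd_p2 k_gt0 below; rewrite leqNgt; apply/negP => lt_3kq.
have below2 := stable_below_half ndvd_p2 lt_3kq below.
have k2_gt0 : (0 < k./2)%N by have := stable_below_ge k_gt0 below; lia.
have := stable_below_ge k2_gt0 below2.
have := stable_below_bound k2_gt0 ltac:(lia) below2.
lia.
Qed.

(* With m = 1 the residue equation reads d + 2y = q, so d is odd and d + 2k < q;
   with m = 3 (or 5 when p = 3) it puts d m outside [q - 2k, q + 2k], although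
   q - 2k <= 2d < d m <= q + 2k once q <= 3k. *)
Lemma stable_cut_odd k i : odd q -> half_range p q k -> half_range p q i ->
  (k < i)%N -> stable_below k -> stable_above k -> False.
Proof.
move=> odd_q hk hi lt_ki below above.
move: hk hi; rewrite !half_rangeE // => /and3P [k_gt0 le_kq _] /and3P [_ le_iq _].
have q_odd := odd_halfK odd_q.
have le_dk := stable_below_ge k_gt0 below.
have le_q := stable_below_bound k_gt0 le_kq below.
have ndvd_p2 : ~~ (p %| 2)%N.
  apply: contraL odd_q => dvd_p2; have p2 : p = 2%N by have := dvdn_leq _ dvd_p2; lia.
  by rewrite -dvdn2 -p2.
have le_q3k := stable_below_ge_third ndvd_p2 k_gt0 below.
have ndvd_p1 : ~~ (p %| 1)%N by rewrite dvdn1 neq_ltn p_gt1 orbT.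
have [y /andP [lt_ky lt_ykq]] :=
  stable_above_residue (k := k) (m := 1%N) odd_q isT ndvd_p1 ltac:(lia) above.
have d_gt0 : (0 < d)%N by lia.
rewrite muln1 => /(dvdn_add_double_eq d_gt0 le_dk lt_ky lt_ykq) e_dyq.
have d_odd : odd d by move: odd_q; rewrite -e_dyq oddD oddM /= addbF.
have d_half := odd_halfK d_odd.
have far m : odd m -> ~~ (p %| m)%N -> (m + 2 * k < q)%N ->
    (d * m + 2 * k < q)%N \/ (q + 2 * k < d * m)%N.
  move=> odd_m ndvd_pm lt_mkq.
  have [y' /andP [lt_ky' lt_yk'q]] := stable_above_residue odd_q odd_m ndvd_pm lt_mkq above.
  by apply: dvdn_add_double_far; rewrite // oddM odd_m d_odd.
case: (eqVneq p 3) => [p3 | p_neq3].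
  have d_neq3 : d != 3%N by apply: contraNneq ndvd_pd => ->; rewrite p3.
  by have := far 5%N isT ltac:(by rewrite p3) ltac:(lia); lia.
have ndvd_p3 : ~~ (p %| 3)%N by rewrite dvdn_prime2.
by have := far 3%N isT ndvd_p3 ltac:(lia); lia.
Qed.

(* N = q/2 - 1 is odd, lies above k, and |d N| = q/2 - d. *)
Lemma stable_cut_even k i : p = 2%N -> (4 %| q)%N -> half_range p q k ->
  half_range p q i -> (k < i)%N -> stable_below k -> stable_above k -> False.
Proof.
move=> p2 /dvdnP [Q eQ] hk hi lt_ki below above.
move: hk hi ndvd_pd; rewrite !half_rangeE // p2 !dvdn2 !negbK.
move=> /and3P [k_gt0 le_kq _] /and3P [_ le_iq /odd_halfK odd_i] /odd_halfK odd_d.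
have le_q := stable_below_bound k_gt0 le_kq below.
set N := (2 * Q - 1)%N.
have hN : half_range p q N.
  rewrite half_rangeE // p2 dvdn2 negbK (_ : N = (2 * (Q - 1)).+1)%N; last by lia.
  by rewrite /= oddM /=; apply/andP; lia.
have := above N hN ltac:(lia).
rewrite (_ : d * N = d./2 * q + (2 * Q - d))%N; last by rewrite eQ /N; nia.
by rewrite -absmod_mod modnMDl absmod_mod absmod_small; lia.
Qed.

End StableSegments.

Lemma no_stable_cut p r d k i : prime p -> half_range p (p ^ r) d -> (1 < d)%N ->
  half_range p (p ^ r) k -> half_range p (p ^ r) i -> (k < i)%N ->
  stable_below p (p ^ r) d k -> stable_above p (p ^ r) d k -> False.
Proof.
move=> p_prime hd d_gt1; have p_gt1 := prime_gt1 p_prime.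
have le_dq : (d * 2 <= p ^ r)%N by move: hd; rewrite half_rangeE // => /and3P [].
have r_gt0 : (0 < r)%N by rewrite lt0n; apply/eqP => r0; move: le_dq; rewrite r0; lia.
have p_dvd_q : (p %| p ^ r)%N by rewrite dvdn_exp.
case: (even_prime p_prime) => [p2 | odd_p].
  apply: stable_cut_even => //; rewrite p2 (_ : 4 = 2 ^ 2)%N // dvdn_exp2l //.
  by rewrite ltnNge; apply/negP => le_r1; move: le_dq; rewrite p2 (_ : r = 1)%N; lia.
by apply: stable_cut_odd => //; rewrite oddX odd_p orbT.
Qed.

Lemma invariant_monotone_const (R : numDomainType) p r d (g : nat -> R) :
  prime p -> half_range p (p ^ r) d -> (1 < d)%N ->
  (forall i j, half_range p (p ^ r) i -> half_range p (p ^ r) j -> (i <= j)%N ->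
     (g i <= g j)%R) \/
  (forall i j, half_range p (p ^ r) i -> half_range p (p ^ r) j -> (i <= j)%N ->
     (g j <= g i)%R) ->
  (forall x, half_range p (p ^ r) x -> g (absmod (p ^ r) (d * x)) = g x) ->
  forall i, half_range p (p ^ r) i -> g i = g 1%N.
Proof.
move=> p_prime hd d_gt1 mono inv; set q := (p ^ r)%N in hd mono inv *.
wlog {mono} mono : g inv / forall i j, half_range p q i -> half_range p q j ->
    (i <= j)%N -> (g i <= g j)%R.
  move=> nondecr; case: mono => [|mono]; first exact: nondecr.
  move=> i hi; apply: oppr_inj; apply: (nondecr (fun i => (- g i)%R)) => // [x hx|i' j' *].
    by rewrite /= inv.
  by rewrite lerN2 mono.
have le_half x : half_range p q x -> (0 < x)%N && (x <= q)%N.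
  by rewrite half_rangeE // => /and3P [x_gt0 le_xq _]; rewrite x_gt0; lia.
have q_gt1 : (1 < q)%N by have /andP := le_half d hd; lia.
have h1 := half_range1 p_prime q_gt1.
pose level x := half_range p q x && (g x == g 1%N).
have [|x /andP [hx _]|k /andP [hk /eqP gk] max_k] := @ex_maxnP level q.
- by exists 1%N; rewrite /level h1 eqxx.
- by have /andP [] := le_half x hx.
have levelE x : half_range p q x -> (x <= k)%N = (g x == g 1%N).
  move=> hx; apply/idP/idP => [le_xk | /eqP gx].
    have /andP [x_gt0 _] := le_half x hx.
    by rewrite eq_le -{1}gk !mono.
  by apply: max_k; rewrite /level hx gx eqxx.
have p_dvd_q : (p %| q)%N.
  by rewrite /q dvdn_exp // lt0n; apply: contraTneq q_gt1 => r0; rewrite /q r0.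
have hdx x : half_range p q x -> half_range p q (absmod q (d * x)).
  by apply: half_range_absmodM => //; apply: ltnW.
move=> i hi; apply/eqP; rewrite -levelE // leqNgt; apply/negP => lt_ki.
apply: (no_stable_cut p_prime hd d_gt1 hk hi lt_ki) => x hx.
  by rewrite !levelE ?hdx // inv.
by rewrite !ltnNge !levelE ?hdx // inv.
Qed.

Local Open Scope ring_scope.

Section ZpAbsmod.

Variable q : nat.
Hypothesis q_gt1 : (1 < q)%N.

Lemma absmod_Zp (b : 'Z_q) : (absmod q b)%:R = b \/ (absmod q b)%:R = - b.
Proof.
have lt_bq : (b < q)%N by rewrite -[X in (_ < X)%N](Zp_cast q_gt1) ltn_ord.
rewrite absmod_leq ?(ltnW lt_bq) //; case: leqP => _; first by left; rewrite natr_Zp.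
by right; rewrite natrB ?(ltnW lt_bq) // pchar_Zp // natr_Zp sub0r.
Qed.

Lemma absmod_natr n : absmod q (n%:R : 'Z_q) = absmod q n.
Proof. by rewrite val_Zp_nat // absmod_mod // ltnW. Qed.

Lemma absmod_Zp_eq1 (b : 'Z_q) : absmod q b = 1%N -> b = 1 \/ b = -1.
Proof.
move=> b1; case: (absmod_Zp b); rewrite b1 mulr1n => e; [left | right]; first by [].
by rewrite -[b]opprK -e.
Qed.

Lemma even_absmod (T : Type) (h : 'Z_q -> T) (b : 'Z_q) :
  (forall b, b \is a GRing.unit -> h (- b) = h b) -> b \is a GRing.unit ->
  h (absmod q b)%:R = h b.
Proof. by move=> heven ub; case: (absmod_Zp b) => ->; rewrite ?heven. Qed.

End ZpAbsmod.

Section ZpPrimePower.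

Variables p r : nat.
Hypotheses (p_prime : prime p) (r_gt0 : (0 < r)%N).

Lemma pexp_gt1 : (1 < p ^ r)%N.
Proof. exact: leq_ltn_trans r_gt0 (ltn_expl r (prime_gt1 p_prime)). Qed.

Lemma unitZp_pexp (b : 'Z_(p ^ r)) : (b \is a GRing.unit) = ~~ (p %| b)%N.
Proof.
by rewrite -{1}[b]natr_Zp unitZpE ?pexp_gt1 // coprime_pexpl // prime_coprime.
Qed.

Lemma half_range_absmod_unit (b : 'Z_(p ^ r)) : b \is a GRing.unit ->
  half_range p (p ^ r) (absmod (p ^ r) b).
Proof.
rewrite unitZp_pexp => ndvd_pb.
by apply: half_range_absmod; rewrite ?dvdn_exp // ltnW // pexp_gt1.
Qed.

Lemma unitZp_half_range x : half_range p (p ^ r) x -> (x%:R : 'Z_(p ^ r)) \is a GRing.unit.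
Proof.
rewrite half_rangeE // unitZp_pexp val_Zp_nat ?pexp_gt1 //.
by rewrite /dvdn modn_dvdm ?dvdn_exp // => /and3P [].
Qed.

End ZpPrimePower.

Unset Implicit Arguments.

Theorem lemma4p1 (R : realType) (p r : nat) (hp : prime p) (hr : (1 <= r)%N)
  (h : 'Z_(p ^ r)%N -> R)
  (heven : forall b : 'Z_(p ^ r)%N, b \is a GRing.unit -> h (- b) = h b)
  (hmono : monotone_on_half p (p ^ r)%N h)
  (a : 'Z_(p ^ r)%N) (ha : a \is a GRing.unit) (ha1 : a != 1) (ha2 : a != -1)
  (hinv : forall b : 'Z_(p ^ r)%N, b \is a GRing.unit -> h (a * b) = h b) :
  forall b c : 'Z_(p ^ r)%N, b \is a GRing.unit -> c \is a GRing.unit -> h b = h c.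
Proof.
have q_gt1 := pexp_gt1 hp hr.
pose g (i : nat) := h i%:R.
set d := absmod (p ^ r) a.
have hd := half_range_absmod_unit hp hr ha.
have d_gt1 : (1 < d)%N.
  move: (hd); rewrite half_rangeE // => /and3P [d_gt0 _ _].
  rewrite ltn_neqAle d_gt0 andbT eq_sym; apply/eqP => /(absmod_Zp_eq1 q_gt1).
  by case=> a1; [move: ha1 | move: ha2]; rewrite a1 eqxx.
have g_inv x : half_range p (p ^ r) x -> g (absmod (p ^ r) (d * x)) = g x.
  move=> hx; have ux := unitZp_half_range hp hr hx.
  rewrite /g -(absmod_natr q_gt1) even_absmod // ?natrM ?unitrM ?ux ?unitZp_half_range //.
  by case: (absmod_Zp q_gt1 a) => ->; rewrite ?mulNr ?heven ?hinv // unitrM ha.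
have g_const := invariant_monotone_const hp hd d_gt1 hmono g_inv.
move=> b c ub uc.
rewrite -(even_absmod q_gt1 heven ub) -(even_absmod q_gt1 heven uc).
by rewrite !g_const ?half_range_absmod_unit.
Qed.
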